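(* Let $\ell$ be a generic length vector of length $n\ge4$ having a nonempty gee, and let $m=n-3$. Then there is no subset $S\subset[\![m+2]\!]$ such that for every $I\subset[\![m+2]\!]$ with $|I|\le m$, $$\phi(R^{m-|I|}V_I)=\begin{cases}1&I\subset S,\\0&\text{otherwise.}\end{cases}$$
   Context: A generic length vector $\ell=(\ell_1,\ldots,\ell_n)$: positive reals, $\ell_1\le\cdots\le\ell_n<\ell_1+\cdots+\ell_{n-1}$, with no $S\subset[\![n]\!]=\{1,\ldots,n\}$ having $\sum_{i\in S}\ell_i=\sum_{i\notin S}\ell_i$. $\overline{M}(\ell)=\{(z_1,\ldots,z_n)\in(S^1)^n:\sum\ell_iz_i=0\}/O(2)$, a closed connected $m$-manifold. $S\subset[\![n]\!]$ is short if $\sum_{i\in S}\ell_i<\sum_{i\notin S}\ell_i$; a subgee is $S\subset[\![n-1]\!]$ with $S\cup\{n\}$ short; gees are the maximal subgees. Cohomology has $\mathbb{Z}_2$ coefficients. By Hausmann–Knudsen, $H^*(\overline{M}(\ell))$ is generated by $R,V_1,\ldots,V_{n-1}\in H^1$ subject only to: (i) monomials of the same degree divisible by exactly the same set of $V_i$'s are equal; with $V_I=\prod_{i\in I}V_i$, the classes $R^{d-|I|}V_I$ span $H^d$; (ii) $V_I=0$ unless $I$ is a subgee; (iii) for each subgee $S$ with $|S|\ge n-2-d$, $\sum_{T}R^{d-|T|}V_T=0$ in $H^d$, summed over $T\subset[\![n-1]\!]$, $|T|\le d$, $T\cap S=\emptyset$. $\phi:H^m(\overline{M}(\ell))\to\mathbb{Z}_2$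 is the isomorphism (evaluation on the fundamental class). *)

From HB Require Import structures.
From mathcomp Require Import all_boot all_order all_algebra.
From mathcomp Require Import reals.
From mathcomp Require Import mpoly.
Set Implicit Arguments. Unset Strict Implicit. Unset Printing Implicit Defensive.
Import Order.TTheory GRing.Theory Num.Theory.
Local Open Scope ring_scope.

(* [[n]] = {1,...,n} is encoded as 'I_n, the ordinal i standing for i+1.
   So the last index n corresponds to the ordinal with value n.-1. *)
Definition is_last {n : nat} (i : 'I_n) : bool := val i == n.-1.

Definition in_n1 {n : nat} (S : {set 'I_n}) : bool := [forall i in S, ~~ is_last i].

Definition generic_length_vector (R : realType) (n : nat) (l : 'I_n -> R) : Prop :=
  [/\ forall i, 0 < l i,
      forall i j : 'I_n, (val i <= val j)%N -> l i <= l j,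
      forall i : 'I_n, is_last i -> l i < \sum_(j | j != i) l j
    & forall S : {set 'I_n}, \sum_(i in S) l i != \sum_(i in ~: S) l i ].

Definition short (R : realType) (n : nat) (l : 'I_n -> R) (S : {set 'I_n}) : bool :=
  \sum_(i in S) l i < \sum_(i in ~: S) l i.

Definition subgee (R : realType) (n : nat) (l : 'I_n -> R) (S : {set 'I_n}) : Prop :=
  in_n1 S /\ short l (S :|: [set i | is_last i]).

Definition gee (R : realType) (n : nat) (l : 'I_n -> R) (S : {set 'I_n}) : Prop :=
  subgee l S /\ forall S' : {set 'I_n}, subgee l S' -> S \subset S' -> S' = S.

(* Polynomial ring Z_2[R, V_1, ..., V_{n-1}] : the variable 'X_i with i < n-1
   is V_{i+1}, the variable 'X_i with i = n-1 (the last ordinal) is R. *)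
Notation Poly n := {mpoly 'F_2[n]}.

(* R (= 'X_last; the sum has exactly one term when n > 0) *)
Definition Rv (n : nat) : Poly n := \sum_(i < n | is_last i) 'X_i.

Definition VI (n : nat) (I : {set 'I_n}) : Poly n := \prod_(i in I) 'X_i.

Definition HK_rel (R : realType) (n : nat) (l : 'I_n -> R) (g : Poly n) : Prop :=
  (exists m m' : 'X_{1..n},
      mdeg m = mdeg m' /\ (forall i : 'I_n, ~~ is_last i -> (0 < m i)%N = (0 < m' i)%N)
      /\ g = 'X_[m] - 'X_[m'])
  \/
  (exists I : {set 'I_n}, in_n1 I /\ ~ subgee l I /\ g = VI I)
  \/
  (exists (S : {set 'I_n}) (d : nat), subgee l S /\ (n - 2 <= #|S| + d)%N /\
      g = \sum_(T : {set 'I_n} | [&& in_n1 T, (#|T| <= d)%N & [disjoint T & S]])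
            Rv n ^+ (d - #|T|) * VI T).

Definition in_ideal (n : nat) (gens : Poly n -> Prop) (p : Poly n) : Prop :=
  exists s : seq (Poly n * Poly n),
    (forall x, x \in s -> gens x.2) /\ p = \sum_(x <- s) x.1 * x.2.

(* p represents the zero class of H^*(Mbar(l); Z_2) *)
Definition HK_zero (R : realType) (n : nat) (l : 'I_n -> R) (p : Poly n) : Prop :=
  in_ideal (HK_rel l) p.

From HB Require Import structures.
From mathcomp Require Import all_boot all_order all_algebra.
From mathcomp Require Import reals.
From mathcomp Require Import mpoly.
From mathcomp Require Import zify lra.
From Stdlib Require Import Classical.
Set Implicit Arguments. Unset Strict Implicit. Unset Printing Implicit Defensive.
Import Order.TTheory GRing.Theory Num.Theory.
Local Open Scope ring_scope.

(* If |S| <= m, take a nonempty subgee S' containing S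
   (S itself, or the given gee when S is empty) and write relation (iii) for
   S' in degree m: every term with T nonempty has T disjoint from S, hence
   vanishes, which leaves R^m = 0 although the empty set is a subset of S.
   If |S| > m, every m-subset T of S avoiding x = min S is a subgee.  The
   complement of T u {n} is a pair {x, c} with l_c <= l_n, so shortness of
   T u {n} forces l_x > sum of l over T, so x > max T, contradicting the
   minimality of x in S (T is nonempty as m >= 1). *)

Section Ideal.

Variables (n : nat) (gens : {mpoly 'F_2[n]} -> Prop).

Lemma in_ideal0 : in_ideal gens 0.
Proof. by exists [::]; rewrite big_nil. Qed.

Lemma in_idealD p q : in_ideal gens p -> in_ideal gens q -> in_ideal gens (p + q).
Proof.
move=> [s [gs ->]] [t [gt ->]]; exists (s ++ t); rewrite big_cat; split=> //.
by move=> x; rewrite mem_cat => /orP[/gs | /gt].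
Qed.

Lemma in_idealN p : in_ideal gens p -> in_ideal gens (- p).
Proof.
move=> [s [gs ->]]; exists [seq (- x.1, x.2) | x <- s]; split.
  by move=> y /mapP[x xs ->]; apply: gs xs.
by rewrite big_map -sumrN; apply: eq_bigr => x _; rewrite mulNr.
Qed.

Lemma in_idealB p q : in_ideal gens p -> in_ideal gens q -> in_ideal gens (p - q).
Proof. by move=> ip iq; apply: in_idealD ip (in_idealN iq). Qed.

Lemma in_ideal_sum (I : finType) (P : pred I) (F : I -> {mpoly 'F_2[n]}) :
  (forall i, P i -> in_ideal gens (F i)) -> in_ideal gens (\sum_(i | P i) F i).
Proof. by apply: big_ind; [apply: in_ideal0 | apply: in_idealD]. Qed.

Lemma in_ideal_mul_gen a g : gens g -> in_ideal gens (a * g).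
Proof.
move=> gg; exists [:: (a, g)]; rewrite big_seq1; split=> // x.
by rewrite inE => /eqP ->.
Qed.

Lemma in_ideal_gen g : gens g -> in_ideal gens g.
Proof. by move=> gg; rewrite -[g]mul1r; apply: in_ideal_mul_gen. Qed.

End Ideal.

Lemma exists_subset_card (T : finType) (A : {set T}) k :
  (k <= #|A|)%N -> exists2 B : {set T}, B \subset A & #|B| = k.
Proof.
rewrite -bin_gt0 -cards_draws => /card_gt0P[B].
by rewrite inE => /andP[BA /eqP cB]; exists B.
Qed.

Lemma in_n1_subset n (A B : {set 'I_n}) : A \subset B -> in_n1 B -> in_n1 A.
Proof.
move=> /subsetP AB /forallP nB; apply/forallP => i; apply/implyP => iA.
exact: implyP (nB i) (AB i iA).
Qed.

Lemma in_n1_set0 n : in_n1 (set0 : {set 'I_n}).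
Proof. by apply/forallP => i; rewrite inE. Qed.

Lemma is_lastE n (i : 'I_n.+1) : is_last i = (i == ord_max).
Proof. by apply/eqP/eqP => [iN|->] //; apply: val_inj. Qed.

Lemma is_last_set1 n : [set i : 'I_n.+1 | is_last i] = [set ord_max].
Proof. by apply/setP => i; rewrite !inE is_lastE. Qed.

Lemma in_n1E n (S : {set 'I_n.+1}) : in_n1 S = (ord_max \notin S).
Proof.
apply/forall_inP/idP => [nS | mS i iS].
  by apply/negP => /nS; rewrite is_lastE eqxx.
by rewrite is_lastE; apply: contraNneq mS => <-.
Qed.

Section Cohomology.

Variables (R : realType) (n : nat) (l : 'I_n -> R).

Lemma HK_zero_mul_VI p I : in_n1 I -> ~ subgee l I -> HK_zero l (p * VI I).
Proof. by move=> nI sI; apply: in_ideal_mul_gen; right; left; exists I. Qed.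

(* Relation (iii) for [S] in degree [d]: its term for [T = set0] is [R^d]. *)
Lemma HK_zero_RvX S d :
  subgee l S -> (n - 2 <= #|S| + d)%N ->
  (forall T, in_n1 T -> (#|T| <= d)%N -> [disjoint T & S] -> T != set0 ->
     HK_zero l (Rv n ^+ (d - #|T|) * VI T)) ->
  HK_zero l (Rv n ^+ d).
Proof.
move=> sS dS vanish.
pose P T := [&& in_n1 T, (#|T| <= d)%N & [disjoint T & S]].
have P0 : P set0 by rewrite /P in_n1_set0 cards0 disjoints_subset sub0set.
have rel : HK_rel l (\sum_(T | P T) Rv n ^+ (d - #|T|) * VI T).
  by right; right; exists S, d.
rewrite (bigD1 set0) //= cards0 subn0 /VI big_set0 mulr1 in rel.
rewrite -[Rv n ^+ d](addrK (\sum_(T | P T && (T != set0)) Rv n ^+ (d - #|T|) * VI T)).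
apply: in_idealB; first exact: in_ideal_gen.
by apply: in_ideal_sum => T /andP[/and3P[nT cT dT] T0]; apply: vanish.
Qed.

End Cohomology.

Section MonotoneLengths.

Variables (R : realType) (n : nat) (l : 'I_n.+1 -> R).
Hypotheses (l_gt0 : forall i, 0 < l i)
           (l_mono : forall i j : 'I_n.+1, (val i <= val j)%N -> l i <= l j).

(* The complement of [T] plus the last index is a pair [{i, c}] with
   [l c <= l ord_max], so shortness forces [l i] above the sum over [T]. *)
Lemma subgee_gap T t i :
  subgee l T -> #|T| = (n.+1 - 3)%N -> t \in T -> i \notin T -> ~~ is_last i ->
  (val t < val i)%N.
Proof.
rewrite /subgee /short is_last_set1 in_n1E setUC => -[mT sT] cT tT iT.
rewrite /is_last /= => iN.
set A := ord_max |: T in sT.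
have iA : i \in ~: A by rewrite !inE negb_or iT andbT; apply: contra iN => /eqP ->.
have [c Ac] : exists c, ~: A :\ i = [set c].
  have n3 : (0 < n.+1 - 3)%N by rewrite -cT; apply/card_gt0P; exists t.
  have : #|~: A| = 2 by have := cardsC A; rewrite cardsU1 mT cT card_ord /=; lia.
  by rewrite (cardsD1 i) iA add1n => -[/eqP/cards1P].
have sumCA : \sum_(j in ~: A) l j = l i + l c by rewrite (big_setD1 _ iA) Ac big_set1.
rewrite sumCA big_setU1 //= (big_setD1 _ tT) /= in sT.
have lcN : l c <= l ord_max by apply: l_mono; rewrite /= -ltnS.
have rest0 : 0 <= \sum_(j in T :\ t) l j by apply: sumr_ge0 => j _; apply: ltW.
rewrite ltnNge; apply/negP => /l_mono; lra.
Qed.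

Lemma exists_subset_not_subgee (S : {set 'I_n.+1}) :
  (4 <= n.+1)%N -> in_n1 S -> (n.+1 - 3 < #|S|)%N ->
  exists T : {set 'I_n.+1}, [/\ T \subset S, #|T| = (n.+1 - 3)%N & ~ subgee l T].
Proof.
move=> n4 nS cS; have [x0 x0S] : exists x0, x0 \in S by apply/card_gt0P; lia.
case: (arg_minnP val x0S) => x xS xmin; have {}xS : x \in S := xS.
have cSx : (n.+1 - 3 <= #|S :\ x|)%N by move: cS; rewrite (cardsD1 x) xS add1n ltnS.
have [T TSx cT] := exists_subset_card cSx.
have TS : T \subset S by apply: subset_trans TSx (subsetDl _ _).
exists T; split=> // sT.
have [t tT] : exists t, t \in T by apply/card_gt0P; lia.
have xT : x \notin T by apply/negP => /(subsetP TSx); rewrite !inE eqxx.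
have xN : ~~ is_last x by move/forallP: nS => /(_ x) /implyP; apply.
have := subgee_gap sT cT tT xT xN.
by rewrite ltnNge xmin //; apply: (subsetP TS).
Qed.

End MonotoneLengths.

Theorem lemma2p1 (R : realType) (n : nat) (l : 'I_n -> R) :
  (4 <= n)%N ->
  generic_length_vector l ->
  (exists G : {set 'I_n}, gee l G /\ G != set0) ->
  ~ exists S : {set 'I_n},
      in_n1 S /\
      forall I : {set 'I_n}, in_n1 I -> (#|I| <= n - 3)%N ->
        (~ HK_zero l (Rv n ^+ ((n - 3) - #|I|) * VI I) <-> I \subset S).
Proof.
case: n l => [//|n] l n4 [l_gt0 l_mono _ _] [G [[sG _] G0]] [S [nS HS]].
have vanish (I : {set 'I_n.+1}) : in_n1 I -> (#|I| <= n.+1 - 3)%N -> ~~ (I \subset S) ->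
    HK_zero l (Rv n.+1 ^+ ((n.+1 - 3) - #|I|) * VI I).
  by move=> nI cI IS; apply: NNPP => /(HS I nI cI); apply/negP.
have subgee_sub (I : {set 'I_n.+1}) : I \subset S -> (#|I| <= n.+1 - 3)%N -> subgee l I.
  move=> IS cI; have nI := in_n1_subset IS nS; apply: NNPP => sI.
  exact: (HS I nI cI).2 IS (HK_zero_mul_VI _ nI sI).
have [small | large] := leqP #|S| (n.+1 - 3); last first.
  have [T [TS cT]] := exists_subset_not_subgee l_gt0 l_mono n4 nS large.
  by apply; apply: subgee_sub TS _; rewrite cT.
have [S' [sS' S'0 SS']] : exists S', [/\ subgee l S', S' != set0 & S \subset S'].
  case: (eqVneq S set0) => [-> | S0]; first by exists G; rewrite sub0set.
  by exists S; split=> //; apply: subgee_sub.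
have := HS set0 (in_n1_set0 _); rewrite cards0 subn0 /VI big_set0 mulr1 => HS0.
apply: (HS0 (leq0n _)).2; first exact: sub0set.
apply: (HK_zero_RvX sS'); first by have := card_gt0 S'; rewrite S'0; lia.
move=> T nT cT dT T0; apply: vanish => //; apply: contra T0 => TS.
by rewrite -(setIidPl (subset_trans TS SS')) disjoint_setI0.
Qed.
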